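(* Let $(N,J,g)$ be a Kähler manifold of complex dimension $2n$ and $F:M\to N$ an immersion of a manifold $M$ of real dimension $2n$, with induced metric $g_M=F^*g$. Let $p_0\in M$ be a point without complex directions, i.e. $\cos\theta_\alpha(p_0)<1$ for all $\alpha$, and let $\{X_\alpha,Y_\alpha\}_{1\le\alpha\le n}$ be a $g_M$-orthonormal basis of $T_{p_0}M$ diagonalizing $F^*\omega$ at $p_0$, with $Z_\alpha=\frac{X_\alpha-iY_\alpha}{2}$, $Z_{\bar\alpha}=\frac{X_\alpha+iY_\alpha}{2}$. Then for all $U,V\in T^{\mathbb C}_{F(p_0)}N$, \[ Ricci^N(U,V)=\sum_{1\le\mu\le n}\frac{4}{\sin^2\theta_\mu}\,R^N\big(U,JV,dF(Z_\mu),\,JdF(Z_{\bar\mu})+i\cos\theta_\mu\, dF(Z_{\bar\mu})\big), \] where $\theta_\mu=\theta_\mu(p_0)$.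
   Context: $\omega(U,V)=g(JU,V)$ is the Kähler form of $N$. At $p\in M$, $F^*\omega$ is identified with a skew-symmetric endomorphism of $T_pM$ via $g_M(F^*\omega(X),Y)=F^*\omega(X,Y)$. A $g_M$-orthonormal basis $X_1,Y_1,\dots,X_n,Y_n$ of $T_pM$ diagonalizes $F^*\omega$ if $F^*\omega(X_\alpha)=\cos\theta_\alpha Y_\alpha$ and $F^*\omega(Y_\alpha)=-\cos\theta_\alpha X_\alpha$ with $1\ge\cos\theta_1\ge\dots\ge\cos\theta_n\ge 0$; the angles $\theta_\alpha\in[0,\pi/2]$ are the Kähler angles of $F$ at $p$. A complex direction at $p$ is a real 2-plane $P\subset T_pM$ with $J\,dF(P)=dF(P)$; $p$ has no complex directions iff $\cos\theta_\alpha(p)<1$ for all $\alpha$. Curvature conventions: $R^N(U,V)W=-\nabla_U\nabla_VW+\nabla_V\nabla_UW+\nabla_{[U,V]}W$, $R^N(U,V,W,Z)=g(R^N(U,V)W,Z)$; $Ricci^N$ is the Ricci tensor of $N$. All tensors ($g$, $R^N$, $Ricci^N$, $dF$, $J$) are extended complex-(multi)linearly to complexified tangent spaces. *)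

From HB Require Import structures.
From mathcomp Require Import all_boot all_order all_algebra.
From mathcomp Require Import reals trigo.
From mathcomp Require Import complex.

Set Implicit Arguments.
Unset Strict Implicit.
Unset Printing Implicit Defensive.

Import Order.TTheory GRing.Theory Num.Theory.
Local Open Scope ring_scope.

(* T_{F(p0)}N is R^(4n) (column vectors),
   T_{p0}M is R^(2n); complexified tangent spaces are C^(4n), C^(2n) with
   C = R[i].  All tensors are given in these coordinates and are extended
   complex-(multi)linearly. *)

Section Defs.
Variable R : realType.
Local Notation C := (R[i]).

Definition toC (p q : nat) (A : 'M[R]_(p, q)) : 'M[C]_(p, q) :=
  map_mx (real_complex R) A.

Definition gR (m : nat) (G : 'M[R]_m) (u v : 'cV[R]_m) : R := (u^T *m G *m v) 0 0.
Definition gC (m : nat) (G : 'M[R]_m) (u v : 'cV[C]_m) : C :=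
  (u^T *m toC G *m v) 0 0.

(* the (0,4) curvature tensor R^N(U,V,W,Z) = g(R^N(U,V)W,Z) given by its
   real components Rc i j k l, and its complex-multilinear extension *)
Definition RtenR (m : nat) (Rc : 'I_m -> 'I_m -> 'I_m -> 'I_m -> R)
  (u v w z : 'cV[R]_m) : R :=
  \sum_(i < m) \sum_(j < m) \sum_(k < m) \sum_(l < m)
     Rc i j k l * u i 0 * v j 0 * w k 0 * z l 0.
Definition RtenC (m : nat) (Rc : 'I_m -> 'I_m -> 'I_m -> 'I_m -> R)
  (u v w z : 'cV[C]_m) : C :=
  \sum_(i < m) \sum_(j < m) \sum_(k < m) \sum_(l < m)
     ((Rc i j k l)%:C)%C * u i 0 * v j 0 * w k 0 * z l 0.

(* Ricci tensor: metric contraction Ricci(U,V) = g^{jl} R^N(U, e_j, V, e_l)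
   (= sum over a g-orthonormal basis e_a of R^N(U,e_a,V,e_a); with the
   curvature sign convention of the paper this is the usual Ricci tensor). *)
Definition RicciC (m : nat) (G : 'M[R]_m) (Rc : 'I_m -> 'I_m -> 'I_m -> 'I_m -> R)
  (U V : 'cV[C]_m) : C :=
  \sum_(j < m) \sum_(l < m)
     (((invmx G) j l)%:C)%C * RtenC Rc U (delta_mx j 0) V (delta_mx l 0).

(* (G, J, Rc) is the data at a point of a Kaehler manifold:
   g positive definite symmetric, J an orthogonal complex structure,
   R^N an algebraic curvature tensor (skew-symmetries, first Bianchi
   identity) which is J-invariant (consequence of nabla J = 0). *)
Definition kaehler_point (m : nat) (G J : 'M[R]_m)
  (Rc : 'I_m -> 'I_m -> 'I_m -> 'I_m -> R) : Prop :=
  [/\ G^T = G,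
      (forall v : 'cV[R]_m, v != 0 -> 0 < gR G v v),
      J *m J = - 1%:M,
      (forall u v, gR G (J *m u) (J *m v) = gR G u v) &
      (forall u v w z : 'cV[R]_m,
         [/\ RtenR Rc u v w z = - RtenR Rc v u w z,
             RtenR Rc u v w z = - RtenR Rc u v z w,
             RtenR Rc u v w z + RtenR Rc v w u z + RtenR Rc w u v z = 0 &
             RtenR Rc u v (J *m w) (J *m z) = RtenR Rc u v w z])].

Definition gM (m k : nat) (G : 'M[R]_m) (dF : 'M[R]_(m, k)) : 'M[R]_k :=
  dF^T *m G *m dF.

Definition pull_omega (m k : nat) (G J : 'M[R]_m) (dF : 'M[R]_(m, k)) : 'M[R]_k :=
  dF^T *m J^T *m G *m dF.

(* F^* omega as a skew endomorphism A of T_pM:  g_M(A X, Y) = F^*omega(X,Y) *)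
Definition pull_omega_end (m k : nat) (G J : 'M[R]_m) (dF : 'M[R]_(m, k)) : 'M[R]_k :=
  (pull_omega G J dF *m invmx (gM G dF))^T.

Definition Zvec (k : nat) (X Y : 'cV[R]_k) : 'cV[C]_k :=
  (2^-1 : C) *: (toC X - 'i%C *: toC Y).
Definition Zbarvec (k : nat) (X Y : 'cV[R]_k) : 'cV[C]_k :=
  (2^-1 : C) *: (toC X + 'i%C *: toC Y).

End Defs.

From HB Require Import structures.
From mathcomp Require Import all_boot all_order all_algebra.
From mathcomp Require Import reals trigo.
From mathcomp Require Import complex ring lra.

Set Implicit Arguments.
Unset Strict Implicit.
Unset Printing Implicit Defensive.

Import Order.TTheory GRing.Theory Num.Theory.
Local Open Scope ring_scope.

(* The Ricci tensor is the g-trace of (W, Z) |-> R^N(U, W, V, Z), so it can be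
   computed as the sum of R^N(U, b_k, V, b^k) over any basis (b_k) of
   T_{F(p0)}N and its g-dual basis (b^k).  Take the frame dF X_mu, dF Y_mu,
   J dF X_mu, J dF Y_mu: as g(J dF X_mu, dF Y_nu) = cos theta_mu delta_{mu nu},
   its dual frame is (dF X_mu + cos theta_mu J dF Y_mu) / sin^2 theta_mu, etc.,
   which makes sense precisely because p0 has no complex directions.  For each mu
   the four resulting terms are combined, using the first Bianchi identity and
   the J-invariance of R^N, into the single term of the statement. *)

Definition kaehler_curvature_form (F : numFieldType) (m : nat)
  (Rf : 'cV[F]_m -> 'cV[F]_m -> 'cV[F]_m -> 'cV[F]_m -> F) (J : 'M[F]_m) : Prop :=
  [/\ forall u v w z, Rf u v w z = - Rf v u w z,
      forall u v w z, Rf u v w z = - Rf u v z w,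
      forall u v w z, Rf u v w z + Rf v w u z + Rf w u v z = 0,
      forall u v w z, Rf u v (J *m w) (J *m z) = Rf u v w z &
      forall u v w a z1 z2, Rf u v w (a *: z1 + z2) = a * Rf u v w z1 + Rf u v w z2].

Section KaehlerCurvatureForm.
Variables (F : numFieldType) (m : nat) (J : 'M[F]_m).
Variable Rf : 'cV[F]_m -> 'cV[F]_m -> 'cV[F]_m -> 'cV[F]_m -> F.
Hypothesis RfK : kaehler_curvature_form Rf J.
Hypothesis JJ : J *m J = -1.

Lemma curv_skew12 u v w z : Rf u v w z = - Rf v u w z. Proof. by case: RfK. Qed.
Lemma curv_skew34 u v w z : Rf u v w z = - Rf u v z w. Proof. by case: RfK. Qed.
Lemma curv_bianchi u v w z : Rf u v w z + Rf v w u z + Rf w u v z = 0.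
Proof. by case: RfK. Qed.
Lemma curv_J34 u v w z : Rf u v (J *m w) (J *m z) = Rf u v w z. Proof. by case: RfK. Qed.

Lemma curv_lin4 u v w a z1 z2 :
  Rf u v w (a *: z1 + z2) = a * Rf u v w z1 + Rf u v w z2.
Proof. by case: RfK. Qed.

Lemma curv4D u v w z1 z2 : Rf u v w (z1 + z2) = Rf u v w z1 + Rf u v w z2.
Proof. by rewrite -[z1]scale1r curv_lin4 mul1r scale1r. Qed.

Lemma curv4Z u v w a z : Rf u v w (a *: z) = a * Rf u v w z.
Proof.
have curv40 : Rf u v w 0 = 0 by apply: (addrI (Rf u v w 0)); rewrite -curv4D !addr0.
by rewrite -[a *: z]addr0 curv_lin4 curv40 addr0.
Qed.

Lemma curv4N u v w z : Rf u v w (- z) = - Rf u v w z.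
Proof. by rewrite -scaleN1r curv4Z mulN1r. Qed.

Lemma curv3D u v w1 w2 z : Rf u v (w1 + w2) z = Rf u v w1 z + Rf u v w2 z.
Proof. by rewrite curv_skew34 curv4D opprD -!curv_skew34. Qed.

Lemma curv3Z u v a w z : Rf u v (a *: w) z = a * Rf u v w z.
Proof. by rewrite curv_skew34 curv4Z -mulrN -curv_skew34. Qed.

Lemma curv3N u v w z : Rf u v (- w) z = - Rf u v w z.
Proof. by rewrite -scaleN1r curv3Z mulN1r. Qed.

Lemma curv_pair_sym u v w z : Rf u v w z = Rf w z u v.
Proof.
have B1 := curv_bianchi v w u z.
have B2 := curv_bianchi w u z v.
have B3 := curv_bianchi u z v w.
have B4 := curv_bianchi z v w u.
rewrite (curv_skew34 w u z v) in B2.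
rewrite (curv_skew34 u z v w) (curv_skew12 v u z w) (curv_skew34 u v z w) opprK in B3.
rewrite (curv_skew34 z v w u) (curv_skew34 v w z u) (curv_skew12 w z v u)
  (curv_skew34 z w v u) opprK in B4.
(* The sum of these four identities is 2 (R(u,v,w,z) - R(w,z,u,v)) = 0. *)
have lin (a b c d e f : F) :
    a + b + c = 0 -> - b + d + e = 0 -> - d + f + c = 0 -> - f - a + e = 0 -> c = - e.
  move=> h1 h2 h3 h4.
  have : (c + e) * 2 = (a + b + c) + (- b + d + e) + (- d + f + c) + (- f - a + e) by ring.
  by rewrite h1 h2 h3 h4 !addr0 => /eqP; rewrite mulf_eq0 pnatr_eq0 orbF addr_eq0 => /eqP.
by rewrite (curv_skew12 w z u v); exact: lin B1 B2 B3 B4.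
Qed.

Lemma curv2N u v w z : Rf u (- v) w z = - Rf u v w z.
Proof. by rewrite curv_pair_sym curv4N -curv_pair_sym. Qed.

Lemma mulJJ (x : 'cV[F]_m) : J *m (J *m x) = - x.
Proof. by rewrite mulmxA JJ mulNmx mul1mx. Qed.

Lemma curvJ2 u v w z : Rf u (J *m v) w (J *m z) = Rf u w v z + Rf u (J *m z) v (J *m w).
Proof.
have B := curv_bianchi u (J *m v) w (J *m z).
rewrite (curv_pair_sym (J *m v) w u (J *m z)) -(curv_J34 u (J *m z) (J *m v) w) mulJJ curv3N in B.
rewrite (curv_J34 w u v z) (curv_skew12 w u v z) in B.
move/eqP: B; rewrite -addrA addr_eq0 opprD !opprK => /eqP ->.
by rewrite addrC.
Qed.

Lemma curv_angle_block (U V x y : 'cV[F]_m) (c i : F) : i * i = -1 ->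
  Rf U x V (x + c *: (J *m y)) + Rf U y V (y - c *: (J *m x))
  + Rf U (J *m x) V (J *m x - c *: y) + Rf U (J *m y) V (J *m y + c *: x)
  = 4 * Rf U (J *m V) (2^-1 *: (x - i *: y))
          (J *m (2^-1 *: (x + i *: y)) + (c * i) *: (2^-1 *: (x + i *: y))).
Proof.
move=> ii.
rewrite -!scalemxAr !(mulmxDr, mulmxBr) -!scalemxAr.
rewrite !(curv4D, curv4Z, curv4N, curv3D, curv3Z, curv3N).
have skewJV w : Rf U (J *m V) w w = 0.
  have /eqP := curv_skew34 U (J *m V) w w.
  by rewrite -subr_eq0 opprK -mulr2n -mulr_natr mulf_eq0 pnatr_eq0 orbF => /eqP.
have JxJy : Rf U (J *m V) y (J *m x) = Rf U (J *m V) x (J *m y).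
  by rewrite curv_skew34 -(curv_J34 U (J *m V) (J *m x) y) mulJJ curv3N opprK.
have Jxy1 : Rf U (J *m V) x y = - Rf U x V (J *m y) + Rf U y V (J *m x).
  by rewrite -[y in LHS]opprK -(mulJJ y) curv4N curvJ2 mulJJ curv2N opprD opprK.
have Jxy2 : Rf U (J *m V) x y = Rf U (J *m x) V y - Rf U (J *m y) V x.
  by rewrite -(curv_J34 U (J *m V) x y) curvJ2 mulJJ curv4N.
rewrite (curvJ2 U V x x) (curvJ2 U V y y) JxJy (curv_skew34 _ _ y x) !skewJV.
have -> : Rf U x V (J *m y) = Rf U y V (J *m x) - Rf U (J *m V) x y.
  by rewrite Jxy1 opprD opprK addrC subrK.
have -> : Rf U (J *m y) V x = Rf U (J *m x) V y - Rf U (J *m V) x y.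
  by rewrite Jxy2 opprB addrC subrK.
by field: ii.
Qed.

End KaehlerCurvatureForm.

Section BigReorder.
Variables (K : nmodType) (I : finType).

Lemma big_rotl3 (F : I -> I -> I -> K) :
  \sum_i \sum_j \sum_k F i j k = \sum_k \sum_i \sum_j F i j k.
Proof. by under eq_bigr => i _ do rewrite exchange_big; rewrite exchange_big. Qed.

Lemma big_rotr3 (F : I -> I -> I -> K) :
  \sum_i \sum_j \sum_k F i j k = \sum_j \sum_k \sum_i F i j k.
Proof. by rewrite exchange_big; under eq_bigr => j _ do rewrite exchange_big. Qed.

Lemma exchange_big_pairs (F : I -> I -> I -> I -> K) :
  \sum_i \sum_j \sum_k \sum_l F i j k l = \sum_k \sum_l \sum_i \sum_j F i j k l.
Proof.
under eq_bigr => i _ do rewrite big_rotr3.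
by rewrite big_rotr3.
Qed.

Lemma exchange_big_mid (F : I -> I -> I -> I -> K) :
  \sum_i \sum_j \sum_k \sum_l F i j k l = \sum_j \sum_l \sum_i \sum_k F i j k l.
Proof. by rewrite exchange_big; under eq_bigr => j _ do rewrite big_rotl3. Qed.

Lemma pair_big_exchange (I' : finType) (F : I * I' -> K) :
  \sum_p F p = \sum_j \sum_i F (i, j).
Proof. by rewrite exchange_big pair_bigA; apply: eq_bigr => -[]. Qed.

End BigReorder.

Section Coordinates.
Variables (R : realType) (m : nat) (Rc : 'I_m -> 'I_m -> 'I_m -> 'I_m -> R).
Local Notation C := (R[i]).

Lemma sum_delta_mx (K : pzRingType) (a : 'I_m) (F : 'I_m -> K) :
  \sum_i (delta_mx a 0 : 'cV[K]_m) i 0 * F i = F a.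
Proof.
rewrite (bigD1 a) //= big1 => [|i /negbTE ia]; first by rewrite mxE !eqxx mul1r addr0.
by rewrite mxE ia mul0r.
Qed.

Lemma RtenR_nested (u v w z : 'cV[R]_m) :
  RtenR Rc u v w z = \sum_i u i 0 * \sum_j v j 0 *
     \sum_k w k 0 * \sum_l z l 0 * Rc i j k l.
Proof.
rewrite /RtenR; apply: eq_bigr => i _; rewrite !mulr_sumr; apply: eq_bigr => j _.
rewrite !mulr_sumr; apply: eq_bigr => k _; rewrite !mulr_sumr; apply: eq_bigr => l _.
ring.
Qed.

Lemma RtenC_nested (u v w z : 'cV[C]_m) :
  RtenC Rc u v w z = \sum_i u i 0 * \sum_j v j 0 *
     \sum_k w k 0 * \sum_l z l 0 * (Rc i j k l)%:C%C.
Proof.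
rewrite /RtenC; apply: eq_bigr => i _; rewrite !mulr_sumr; apply: eq_bigr => j _.
rewrite !mulr_sumr; apply: eq_bigr => k _; rewrite !mulr_sumr; apply: eq_bigr => l _.
ring.
Qed.

Lemma RtenR_delta i j k l :
  RtenR Rc (delta_mx i 0) (delta_mx j 0) (delta_mx k 0) (delta_mx l 0) = Rc i j k l.
Proof. by rewrite RtenR_nested !sum_delta_mx. Qed.

Lemma RtenR_deltaJ (J : 'M[R]_m) i j a b :
  RtenR Rc (delta_mx i 0) (delta_mx j 0) (J *m delta_mx a 0) (J *m delta_mx b 0) =
  \sum_k \sum_l Rc i j k l * J k a * J l b.
Proof.
rewrite RtenR_nested !sum_delta_mx; apply: eq_bigr => k _; rewrite mulr_sumr.
by apply: eq_bigr => l _; rewrite -!colE !mxE; ring.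
Qed.

Lemma RtenC_expand (u w v z : 'cV[C]_m) :
  RtenC Rc u w v z =
  \sum_j \sum_l w j 0 * z l 0 * RtenC Rc u (delta_mx j 0) v (delta_mx l 0).
Proof.
have RtenC_delta24 j l : RtenC Rc u (delta_mx j 0) v (delta_mx l 0) =
    \sum_i u i 0 * \sum_k v k 0 * (Rc i j k l)%:C%C.
  rewrite RtenC_nested; apply: eq_bigr => i _; rewrite sum_delta_mx; congr (_ * _).
  by apply: eq_bigr => k _; rewrite sum_delta_mx.
under [RHS]eq_bigr => j _ do under eq_bigr => l _ do rewrite RtenC_delta24.
rewrite /RtenC exchange_big_mid; apply: eq_bigr => j _; apply: eq_bigr => l _.
rewrite !mulr_sumr; apply: eq_bigr => i _; rewrite !mulr_sumr; apply: eq_bigr => k _.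
ring.
Qed.

Lemma RtenC_lin4 u v w a (z1 z2 : 'cV[C]_m) :
  RtenC Rc u v w (a *: z1 + z2) = a * RtenC Rc u v w z1 + RtenC Rc u v w z2.
Proof.
rewrite /RtenC mulr_sumr -big_split; apply: eq_bigr => i _.
rewrite mulr_sumr -big_split; apply: eq_bigr => j _.
rewrite mulr_sumr -big_split; apply: eq_bigr => k _.
rewrite mulr_sumr -big_split; apply: eq_bigr => l _.
rewrite !mxE /=; ring.
Qed.

Lemma RtenC_skew12 : (forall i j k l, Rc i j k l = - Rc j i k l) ->
  forall u v w z : 'cV[C]_m, RtenC Rc u v w z = - RtenC Rc v u w z.
Proof.
move=> skew u v w z; rewrite /RtenC [in RHS]exchange_big -sumrN; apply: eq_bigr => i _.
rewrite -sumrN; apply: eq_bigr => j _; rewrite -sumrN; apply: eq_bigr => k _.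
by rewrite -sumrN; apply: eq_bigr => l _; rewrite skew rmorphN /=; ring.
Qed.

Lemma RtenC_skew34 : (forall i j k l, Rc i j k l = - Rc i j l k) ->
  forall u v w z : 'cV[C]_m, RtenC Rc u v w z = - RtenC Rc u v z w.
Proof.
move=> skew u v w z; rewrite /RtenC -sumrN; apply: eq_bigr => i _.
rewrite -sumrN; apply: eq_bigr => j _; rewrite [in RHS]exchange_big -sumrN.
apply: eq_bigr => k _; rewrite -sumrN; apply: eq_bigr => l _.
by rewrite skew rmorphN /=; ring.
Qed.

Lemma RtenC_bianchi : (forall i j k l, Rc i j k l + Rc j k i l + Rc k i j l = 0) ->
  forall u v w z : 'cV[C]_m,
  RtenC Rc u v w z + RtenC Rc v w u z + RtenC Rc w u v z = 0.
Proof.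
move=> bianchi u v w z; rewrite /RtenC [X in _ + X + _]big_rotl3 [X in _ + X]big_rotr3.
rewrite -!big_split; apply: big1 => i _; rewrite -!big_split; apply: big1 => j _.
rewrite -!big_split; apply: big1 => k _; rewrite -!big_split; apply: big1 => l _ /=.
transitivity ((Rc i j k l + Rc j k i l + Rc k i j l)%:C%C * (u i 0 * v j 0 * w k 0 * z l 0)).
  by rewrite !rmorphD /=; ring.
by rewrite bianchi mul0r.
Qed.

Lemma RtenC_J34 (J : 'M[R]_m) :
  (forall i j a b, \sum_k \sum_l Rc i j k l * J k a * J l b = Rc i j a b) ->
  forall u v w z : 'cV[C]_m, RtenC Rc u v (toC J *m w) (toC J *m z) = RtenC Rc u v w z.
Proof.
move=> Jinv u v w z; rewrite /RtenC; apply: eq_bigr => i _; apply: eq_bigr => j _.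
have expandJ k l :
    (Rc i j k l)%:C%C * u i 0 * v j 0 * (toC J *m w) k 0 * (toC J *m z) l 0 =
    \sum_a \sum_b (Rc i j k l)%:C%C * (J k a)%:C%C * (J l b)%:C%C *
       (u i 0 * v j 0 * w a 0 * z b 0).
  rewrite !mxE -mulrA big_distrlr mulr_sumr; apply: eq_bigr => a _.
  by rewrite mulr_sumr; apply: eq_bigr => b _ /=; rewrite !mxE; ring.
under eq_bigr => k _ do under eq_bigr => l _ do rewrite expandJ.
rewrite exchange_big_pairs; apply: eq_bigr => a _; apply: eq_bigr => b _.
rewrite -(Jinv i j a b) rmorph_sum /= !mulr_suml; apply: eq_bigr => k _.
rewrite rmorph_sum /= !mulr_suml; apply: eq_bigr => l _.
by rewrite !rmorphM /=; ring.
Qed.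

Lemma kaehler_point_curvature_form (G J : 'M[R]_m) :
  kaehler_point G J Rc -> kaehler_curvature_form (RtenC Rc) (toC J).
Proof.
case=> _ _ _ _ RtenRK.
have component i j k l := RtenRK (delta_mx i 0) (delta_mx j 0) (delta_mx k 0) (delta_mx l 0).
split; [apply: RtenC_skew12 | apply: RtenC_skew34 | apply: RtenC_bianchi |
        apply: RtenC_J34 | exact: RtenC_lin4] => i j k l.
- by have [+ _ _ _] := component i j k l; rewrite !RtenR_delta.
- by have [_ + _ _] := component i j k l; rewrite !RtenR_delta.
- by have [_ _ + _] := component i j k l; rewrite !RtenR_delta.
- by have [_ _ _ +] := component i j k l; rewrite RtenR_deltaJ RtenR_delta.
Qed.

End Coordinates.

Section Metric.
Variables (R : realType) (m : nat) (G : 'M[R]_m).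

Lemma gRDr u v w : gR G u (v + w) = gR G u v + gR G u w.
Proof. by rewrite /gR mulmxDr mxE. Qed.

Lemma gRZr u a v : gR G u (a *: v) = a * gR G u v.
Proof. by rewrite /gR -scalemxAr mxE. Qed.

Lemma gRNr u v : gR G u (- v) = - gR G u v.
Proof. by rewrite /gR mulmxN mxE. Qed.

Lemma gRZl a u v : gR G (a *: u) v = a * gR G u v.
Proof. by rewrite /gR linearZ /= -!scalemxAl mxE. Qed.

Lemma gR_sym u v : G^T = G -> gR G u v = gR G v u.
Proof.
move=> Gsym; have tr11 (A : 'M[R]_1) : A 0 0 = A^T 0 0 by rewrite mxE.
by rewrite /gR tr11 !trmx_mul trmxK Gsym mulmxA.
Qed.

Lemma mulmx_trG_entry (B D : 'M[R]_m) k l :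
  (B^T *m G *m D) k l = gR G (col k B) (col l D).
Proof.
rewrite /gR tr_col -!row_mul mxE [RHS]mxE [RHS]mxE; apply: eq_bigr => j _.
by rewrite !mxE.
Qed.

End Metric.

Section DualFrameTrace.
Variables (R : realType) (m : nat) (G : 'M[R]_m).
Local Notation C := (R[i]).

Lemma invmx_mulmx_dual (B D : 'M[R]_m) : B^T *m G *m D = 1%:M -> D *m B^T = invmx G.
Proof.
move=> BGD; have [BGu _] := mulmx1_unit BGD.
have Gu : G \in unitmx by move: BGu; rewrite unitmx_mul => /andP[].
by rewrite -[D *m B^T]mulmx1 -(mulmxV Gu) mulmxA -(mulmxA D) (mulmx1C BGD) mul1mx.
Qed.

Lemma trace_dual_frame (I : finType) (b d : I -> 'cV[R]_m)
    (T : 'cV[C]_m -> 'cV[C]_m -> C) :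
  #|I| = m -> G^T = G -> (forall k l, gR G (b k) (d l) = (k == l)%:R) ->
  (forall w z, T w z = \sum_j \sum_l w j 0 * z l 0 * T (delta_mx j 0) (delta_mx l 0)) ->
  \sum_j \sum_l (invmx G j l)%:C%C * T (delta_mx j 0) (delta_mx l 0) =
  \sum_k T (toC (b k)) (toC (d k)).
Proof.
move=> cardI Gsym dual expandT.
pose e (k : 'I_m) : I := enum_val (cast_ord (esym cardI) k).
have e_bij : bijective e.
  exists (fun i => cast_ord cardI (enum_rank i)) => [k | i].
    by rewrite /e enum_valK cast_ordKV.
  by rewrite /e cast_ordK enum_rankK.
pose B : 'M[R]_m := \matrix_(r, k) b (e k) r 0.
pose D : 'M[R]_m := \matrix_(r, k) d (e k) r 0.
have colB k : col k B = b (e k) by apply/colP => r; rewrite !mxE.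
have colD k : col k D = d (e k) by apply/colP => r; rewrite !mxE.
have DB : D *m B^T = invmx G.
  apply: invmx_mulmx_dual; apply/matrixP => k l.
  by rewrite mulmx_trG_entry colB colD dual (bij_eq e_bij) mxE.
have invG_sym j l : invmx G j l = invmx G l j by rewrite -[in LHS]Gsym -trmx_inv mxE.
rewrite (reindex e) /=; last exact: onW_bij.
under [RHS]eq_bigr => k _ do rewrite -colB -colD expandT.
rewrite big_rotr3; apply: eq_bigr => j _; apply: eq_bigr => l _.
rewrite -mulr_suml invG_sym -DB mxE rmorph_sum; congr (_ * _); apply: eq_bigr => k _.
by rewrite !mxE /= rmorphM /=; ring.
Qed.

End DualFrameTrace.

Section DualFrame.
Variables (R : realType) (m n : nat) (G J : 'M[R]_m).
Variables (x y : 'I_n -> 'cV[R]_m) (c : 'I_n -> R).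

Definition frame (p : 'I_4 * 'I_n) : 'cV[R]_m :=
  nth 0 [:: x p.2; y p.2; J *m x p.2; J *m y p.2] p.1.

(* [c mu] stands for cos theta_mu. *)
Definition coframe (p : 'I_4 * 'I_n) : 'cV[R]_m :=
  let: (a, mu) := p in
  (1 - c mu ^+ 2)^-1 *:
  nth 0 [:: x mu + c mu *: (J *m y mu); y mu - c mu *: (J *m x mu);
            J *m x mu - c mu *: y mu; J *m y mu + c mu *: x mu] a.

Hypothesis Gsym : G^T = G.
Hypothesis JJ : J *m J = -1.
Hypothesis J_isometry : forall u v, gR G (J *m u) (J *m v) = gR G u v.
Hypothesis x_orthonormal : forall a b, gR G (x a) (x b) = (a == b)%:R.
Hypothesis y_orthonormal : forall a b, gR G (y a) (y b) = (a == b)%:R.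
Hypothesis xy_orthogonal : forall a b, gR G (x a) (y b) = 0.
Hypothesis omega_xx : forall a b, gR G (J *m x a) (x b) = 0.
Hypothesis omega_xy : forall a b, gR G (J *m x a) (y b) = c a * (a == b)%:R.
Hypothesis omega_yy : forall a b, gR G (J *m y a) (y b) = 0.
Hypothesis c2_neq1 : forall a, 1 - c a ^+ 2 != 0.

Lemma gR_Jr u v : gR G u (J *m v) = - gR G (J *m u) v.
Proof. by rewrite -[LHS]J_isometry mulmxA JJ mulNmx mul1mx gRNr. Qed.

Lemma frame_coframe_dual p q : gR G (frame p) (coframe q) = (p == q)%:R.
Proof.
have yx_orthogonal a b : gR G (y a) (x b) = 0 by rewrite gR_sym.
have omega_yx a b : gR G (J *m y a) (x b) = - c b * (a == b)%:R.
  by rewrite gR_sym // gR_Jr omega_xy mulNr eq_sym.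
case: p q => [a mu] [b nu]; rewrite /frame /coframe gRZr xpair_eqE -val_eqE /=.
case: a => [[|[|[|[|?]]]] ?] //; case: b => [[|[|[|[|?]]]] ?] //=.
all: rewrite -?scaleNr.
all: repeat match goal with
  | |- context [gR _ ?u (?v + ?w)] => rewrite (gRDr G u v w)
  | |- context [gR _ ?u (?a *: ?v)] => rewrite (gRZr G u a v)
  | |- context [gR _ (J *m ?u) (J *m ?v)] => rewrite (J_isometry u v)
  | |- context [gR _ ?u (J *m ?v)] => rewrite (gR_Jr u v)
  end.
all: rewrite ?x_orthonormal ?y_orthonormal ?xy_orthogonal ?yx_orthogonal.
all: rewrite ?omega_xx ?omega_xy ?omega_yx ?omega_yy.
all: case: (eqVneq mu nu) => [<-|mu_nu]; rewrite ?eqxx ?(negbTE mu_nu) /=.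
all: by field; exact: c2_neq1.
Qed.

End DualFrame.

Section PullBack.
Variables (R : realType) (m k : nat) (G J : 'M[R]_m) (dF : 'M[R]_(m, k)).

Lemma gM_gR x y : gR (gM G dF) x y = gR G (dF *m x) (dF *m y).
Proof. by rewrite /gR /gM trmx_mul !mulmxA. Qed.

Lemma gM_unit : (forall v, v != 0 -> 0 < gR G v v) -> \rank dF = k -> gM G dF \in unitmx.
Proof.
move=> Gpos rank_dF; rewrite -row_free_unit; apply: inj_row_free => v vgM0.
have dFt_free : row_free dF^T by rewrite /row_free mxrank_tr rank_dF.
have dFv0 : dF *m v^T = 0.
  have : gR G (dF *m v^T) (dF *m v^T) = 0 by rewrite -gM_gR /gR trmxK vgM0 mul0mx mxE.
  by case: (eqVneq (dF *m v^T) 0) => // /Gpos /[swap] ->; rewrite ltxx.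
apply/eqP; rewrite -(mulmx_free_eq0 _ dFt_free) -[v]trmxK -trmx_mul dFv0.
by apply/eqP/matrixP => i j; rewrite !mxE.
Qed.

Lemma pull_omega_endP x y : gM G dF \in unitmx ->
  gR G (J *m (dF *m x)) (dF *m y) = gR (gM G dF) (pull_omega_end G J dF *m x) y.
Proof.
rewrite /gR /pull_omega_end [in RHS]trmx_mul trmxK /pull_omega.
move: (gM G dF) => M Mu.
by rewrite !mulmxA (mulmxKV Mu) !trmx_mul !mulmxA.
Qed.

Lemma pullback_frame_coframe_dual (n : nat) (X Y : 'I_n -> 'cV[R]_k) (c : 'I_n -> R) :
  G^T = G -> J *m J = -1 -> (forall u v, gR G (J *m u) (J *m v) = gR G u v) ->
  gM G dF \in unitmx ->
  (forall a b, [/\ gR (gM G dF) (X a) (X b) = (a == b)%:R,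
                   gR (gM G dF) (Y a) (Y b) = (a == b)%:R &
                   gR (gM G dF) (X a) (Y b) = 0]) ->
  (forall a, pull_omega_end G J dF *m X a = c a *: Y a /\
             pull_omega_end G J dF *m Y a = - c a *: X a) ->
  (forall a, 1 - c a ^+ 2 != 0) ->
  let x mu := dF *m X mu in let y mu := dF *m Y mu in
  forall p q, gR G (frame J x y p) (coframe J x y c q) = (p == q)%:R.
Proof.
move=> Gsym JJ J_isometry gMu ON diag c2_neq1 x y.
apply: frame_coframe_dual => // a b; rewrite /x /y.
- by rewrite -gM_gR; case: (ON a b).
- by rewrite -gM_gR; case: (ON a b).
- by rewrite -gM_gR; case: (ON a b).
- rewrite pull_omega_endP // (proj1 (diag a)) gRZl gM_gR gR_sym // -gM_gR.
  by case: (ON b a) => _ _ ->; rewrite mulr0.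
- by rewrite pull_omega_endP // (proj1 (diag a)) gRZl; case: (ON a b) => _ -> _.
- rewrite pull_omega_endP // (proj2 (diag a)) gRZl.
  by case: (ON a b) => _ _ ->; rewrite mulr0.
Qed.

End PullBack.

Lemma sin2_neq0 (R : realType) (t : R) : 0 <= t <= pi / 2 -> cos t < 1 -> sin t ^+ 2 != 0.
Proof.
case/andP => t_ge0 t_le_pi2; rewrite sin2cos2 subr_eq0 eq_sym => cos_lt1.
have cos_ge0 : 0 <= cos t.
  apply: cos_ge0_pihalf; rewrite t_le_pi2 andbT (le_trans _ t_ge0) // oppr_le0.
  by rewrite divr_ge0 // pi_ge0.
have cos2_lt1 : cos t ^+ 2 < 1 by rewrite expr2; nra.
by rewrite lt_eqF.
Qed.

Lemma mulmx_Zvec (R : realType) (m k : nat) (A : 'M[R]_(m, k)) (X Y : 'cV[R]_k) :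
  toC A *m Zvec X Y = Zvec (A *m X) (A *m Y).
Proof. by rewrite /Zvec /toC -scalemxAr mulmxBr -scalemxAr !map_mxM. Qed.

Lemma mulmx_Zbarvec (R : realType) (m k : nat) (A : 'M[R]_(m, k)) (X Y : 'cV[R]_k) :
  toC A *m Zbarvec X Y = Zbarvec (A *m X) (A *m Y).
Proof. by rewrite /Zbarvec /toC -scalemxAr mulmxDr -scalemxAr !map_mxM. Qed.

Section FrameCurvature.
Variables (R : realType) (m : nat) (Rc : 'I_m -> 'I_m -> 'I_m -> 'I_m -> R) (J : 'M[R]_m).
Hypothesis RK : kaehler_curvature_form (RtenC Rc) (toC J).
Hypothesis JJ : J *m J = -1.

Lemma sum_frame_curv (n : nat) (x y : 'I_n -> 'cV[R]_m) (c : 'I_n -> R) U V mu :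
  \sum_(a < 4) RtenC Rc U (toC (frame J x y (a, mu))) V (toC (coframe J x y c (a, mu))) =
  (4 / (1 - c mu ^+ 2))%:C%C * RtenC Rc U (toC J *m V) (Zvec (x mu) (y mu))
     (toC J *m Zbarvec (x mu) (y mu) + ((c mu)%:C%C * 'i%C) *: Zbarvec (x mu) (y mu)).
Proof.
have JJC : toC J *m toC J = -1 by rewrite /toC -map_mxM JJ map_mxN map_mx1.
rewrite !big_ord_recl big_ord0 addr0 !addrA /frame /coframe /= /Zvec /Zbarvec.
rewrite /toC !(map_mxZ, map_mxD, map_mxB, map_mxN, map_mxM) !(curv4Z RK) -!mulrDr.
rewrite (curv_angle_block RK JJC _ _ _ _ _ (i := 'i%C)); last by rewrite -expr2 sqr_i.
by rewrite mulrA; congr (_ * _); rewrite rmorphM rmorph_nat mulrC.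
Qed.

End FrameCurvature.

Theorem lemma1p1 (R : realType) (n : nat)
  (G J : 'M[R]_(4 * n)) (Rc : 'I_(4 * n) -> 'I_(4 * n) -> 'I_(4 * n) -> 'I_(4 * n) -> R)
  (dF : 'M[R]_(4 * n, 2 * n))
  (X Y : 'I_n -> 'cV[R]_(2 * n)) (theta : 'I_n -> R) :
  kaehler_point G J Rc ->
  \rank dF = (2 * n)%N ->
  (* {X_a, Y_a} is g_M-orthonormal *)
  (forall a b : 'I_n,
     [/\ gR (gM G dF) (X a) (X b) = (a == b)%:R,
         gR (gM G dF) (Y a) (Y b) = (a == b)%:R &
         gR (gM G dF) (X a) (Y b) = 0]) ->
  (* Kaehler angles theta_a in [0, pi/2], cos decreasing *)
  (forall a : 'I_n, 0 <= theta a <= pi / 2) ->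
  (forall a b : 'I_n, (a <= b)%N -> cos (theta b) <= cos (theta a)) ->
  (* the basis diagonalizes F^* omega *)
  (forall a : 'I_n,
     pull_omega_end G J dF *m X a = cos (theta a) *: Y a /\
     pull_omega_end G J dF *m Y a = - cos (theta a) *: X a) ->
  (* p0 has no complex directions *)
  (forall a : 'I_n, cos (theta a) < 1) ->
  forall U V : 'cV[R[i]]_(4 * n),
    RicciC G Rc U V =
    \sum_(mu < n)
      (((4 / sin (theta mu) ^+ 2)%:C)%C *
       RtenC Rc U (toC J *m V)
         (toC dF *m Zvec (X mu) (Y mu))
         (toC J *m (toC dF *m Zbarvec (X mu) (Y mu))
          + (((cos (theta mu))%:C)%C * 'i%C) *: (toC dF *m Zbarvec (X mu) (Y mu)))).
Proof.
move=> KP rank_dF ON angles _ diag cos_lt1 U V.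
have [Gsym Gpos JJ J_isometry _] := KP.
have c2_neq1 a : 1 - cos (theta a) ^+ 2 != 0.
  by rewrite -sin2cos2; exact: sin2_neq0 (angles a) (cos_lt1 a).
have dual := pullback_frame_coframe_dual Gsym JJ J_isometry (gM_unit Gpos rank_dF) ON diag c2_neq1.
rewrite /RicciC (trace_dual_frame (T := fun w z => RtenC Rc U w V z) _ Gsym dual); first last.
- by move=> w z /=; rewrite RtenC_expand.
- by rewrite card_prod !card_ord.
rewrite pair_big_exchange; apply: eq_bigr => mu _.
rewrite (sum_frame_curv (kaehler_point_curvature_form KP) JJ) /=.
by rewrite mulmx_Zvec (mulmx_Zbarvec dF) sin2cos2.
Qed.
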